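(* Let $(M^{2m},g,I,J)$ be a generalized Kähler manifold with $\det(I+J)\neq0$ everywhere, and let $b:=-g(I+J)^{-1}(I-J)$, i.e. $b(X,Y)=-g((I+J)^{-1}(I-J)X,Y)$, which is a 2-form of type $(2,0)+(0,2)$ with respect to both $I$ and $J$. Then for every vector $X$, $$d\big(\log\det(I+J)\big)(X)=-2\langle b,\iota_XH\rangle_g,$$ where $H=d^c_I\omega_I$.
   Context: Conventions: $\omega_I(X,Y):=g(IX,Y)$, $d^c_I:=\sqrt{-1}(\bar\partial_I-\partial_I)$. A generalized Kähler structure $(g,I,J)$: integrable $I,J$, $g$ Hermitian for both, with $d^c_I\omega_I=H=-d^c_J\omega_J$ and $dH=0$. The inner product on 2-forms is the standard one induced by $g$ (for which $e^i\wedge e^j$, $i<j$, are orthonormal for a $g$-orthonormal coframe). *)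

(* Local (coordinate) model of a generalized Kähler manifold: an open subset
   U of R^(2m), vectors are row vectors 'rV[R]_(2m), endomorphism fields are
   matrix-valued functions acting on row vectors by right multiplication. *)
From HB Require Import structures.
From mathcomp Require Import all_boot all_order all_algebra.
From mathcomp Require Import all_classical all_reals all_analysis.
Set Implicit Arguments.
Unset Strict Implicit.
Unset Printing Implicit Defensive.
Import Order.TTheory GRing.Theory Num.Theory.
Import numFieldNormedType.Exports.
Local Open Scope ring_scope.
Local Open Scope classical_set_scope.

Section GK.
Variables (R : realType) (n : nat).
Local Notation V := 'rV[R]_n.

Definition app (A : 'M[R]_n) (X : V) : V := X *m A.

Definition bil (G : 'M[R]_n) (X Y : V) : R := (X *m G *m Y^T) 0 0.

Definition evec (i : 'I_n) : V := delta_mx 0 i.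

Definition Dm (F : V -> 'M[R]_n) (v x : V) : 'M[R]_n :=
  \matrix_(i, j) derive (fun y => F y i j) x v.

Fixpoint iterD (vs : seq V) (f : V -> R) : V -> R :=
  match vs with
  | [::] => f
  | v :: vs' => fun x => derive (iterD vs' f) x v
  end.

Definition smooth_on (U : set V) (f : V -> R) : Prop :=
  forall (vs : seq V) (x : V), U x -> differentiable (iterD vs f) x.

Definition smooth_mx_on (U : set V) (F : V -> 'M[R]_n) : Prop :=
  forall i j, smooth_on U (fun y => F y i j).

(* Nijenhuis tensor of the endomorphism field I at x, evaluated on X, Y
   (computed with constant vector fields X, Y, whose brackets vanish):
   N(X,Y) = [IX,IY] - I[IX,Y] - I[X,IY] - [X,Y]. *)
Definition nijenhuis (I : V -> 'M[R]_n) (x X Y : V) : V :=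
  app (Dm I (app (I x) X) x) Y - app (Dm I (app (I x) Y) x) X
  + app (I x) (app (Dm I Y x) X) - app (I x) (app (Dm I X x) Y).

Definition form (p : nat) := V -> ('I_p -> V) -> R.

(* exterior derivative, via the coordinate formula with constant vector
   fields: d a (X_0..X_p) = sum_i (-1)^i D_{X_i} (a (X_0,..,^X_i,..,X_p)) *)
Definition dform (p : nat) (a : form p) : form p.+1 :=
  fun x Xs => \sum_(i < p.+1)
    (-1) ^+ i * derive (fun y => a y (fun j => Xs (lift i j))) x (Xs i).

Definition form_act (p : nat) (A : V -> 'M[R]_n) (a : form p) : form p :=
  fun x Xs => a x (fun j => app (A x) (Xs j)).

(* d^c_I = sqrt(-1)(dbar_I - d_I) = I^{-1} d I on real forms *)
Definition dc (p : nat) (I : V -> 'M[R]_n) (a : form p) : form p.+1 :=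
  form_act (fun x => invmx (I x)) (dform (form_act I a)).

Definition pair2 (X Y : V) : 'I_2 -> V := fun k => if val k == 0%N then X else Y.

Definition omega (G I : V -> 'M[R]_n) : form 2 :=
  fun x Xs => bil (G x) (app (I x) (Xs ord0)) (Xs ord_max).

Definition contr (p : nat) (X : V) (a : form p.+1) : form p :=
  fun x Xs => a x (fun k : 'I_p.+1 => if unlift ord0 k is Some j then Xs j else X).

(* inner product of 2-forms induced by g:
   <a,b> = 1/2 sum g^{ik} g^{jl} a_{ij} b_{kl}
   (= sum_{i<j} a(f_i,f_j) b(f_i,f_j) for a g-orthonormal frame f). *)
Definition ip2 (G : 'M[R]_n) (a b : ('I_2 -> V) -> R) : R :=
  2^-1 * \sum_(i < n) \sum_(j < n) \sum_(k < n) \sum_(l < n)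
    invmx G i k * invmx G j l * a (pair2 (evec i) (evec j))
                              * b (pair2 (evec k) (evec l)).

Definition hermitian_cx_on (U : set V) (G I : V -> 'M[R]_n) : Prop :=
  smooth_mx_on U I /\
  (forall x, U x -> I x *m I x = - 1%:M) /\
  (forall x X Y, U x -> nijenhuis I x X Y = 0) /\
  (forall x X Y, U x -> bil (G x) (app (I x) X) (app (I x) Y) = bil (G x) X Y).

Definition riemannian_on (U : set V) (G : V -> 'M[R]_n) : Prop :=
  smooth_mx_on U G /\
  (forall x, U x -> (G x)^T = G x) /\
  (forall x X, U x -> X != 0 -> 0 < bil (G x) X X).

Definition gen_kahler_on (U : set V) (G I J : V -> 'M[R]_n) : Prop :=
  open U /\ riemannian_on U G /\ hermitian_cx_on U G I /\ hermitian_cx_on U G J /\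
  (forall x Xs, U x -> dc I (omega G I) x Xs = - dc J (omega G J) x Xs) /\
  (forall x Xs, U x -> dform (dc I (omega G I)) x Xs = 0).

Definition bform (G I J : V -> 'M[R]_n) : form 2 :=
  fun x Xs => - bil (G x) (app (invmx (I x + J x)) (app (I x - J x) (Xs ord0)))
                          (Xs ord_max).

End GK.

From HB Require Import structures.
From mathcomp Require Import all_boot all_order all_algebra.
From mathcomp Require Import all_classical all_reals all_analysis.
From mathcomp Require Import perm polyrcf ring lra.
Import Order.TTheory GRing.Theory Num.Theory.
Import numFieldNormedType.Exports.
Set Implicit Arguments.
Unset Strict Implicit.
Unset Printing Implicit Defensive.
Local Open Scope ring_scope.
Local Open Scope classical_set_scope.

(* In coordinates, Jacobi's formula gives d log det(I+J)(X) = tr((D_X I + D_X J)(I+J)^-1),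
   D the flat derivative, provided det(I+J) > 0; and it is, because S = I+J is g-skew, so
   S + t has no kernel for t > 0 and det(S + t) -> +oo.  For a g-orthogonal integrable
   complex structure I, the Bismut identity (nabla^+ I = 0) expresses D_X I through
   H = d^c_I omega_I and the Christoffel symbols C of g:
     (D_X I) g = 1/2 (I H_X + H_X I^T) - (I C_X + C_X I^T).
   As d^c_J omega_J = -H, adding the identities for I and J gives
     (D_X S) g = 1/2 (K H_X + H_X K^T) - (S C_X + C_X S^T),   K = I - J.
   Multiply by g^-1 S^-1 and take traces: S and K are g-skew and KS = -SK, so the
   C-terms cancel and the H-terms leave tr(H_X g^-1 S^-1 K), which is -2 <b, iota_X H>. *)

Section MatrixFieldCalculus.
Variables (R : realType) (n : nat).
Local Notation V := 'rV[R]_n.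
Implicit Types (f : V -> R) (x v : V).

Let scaleE (a b : R) : a *: b = a * b := erefl.

Lemma is_derive_sum_seq (I : Type) (r : seq I) (P : pred I) (f : I -> V -> R)
    (df : I -> R) x v :
  (forall i, is_derive x v (f i) (df i)) ->
  is_derive x v (fun y => \sum_(i <- r | P i) f i y) (\sum_(i <- r | P i) df i).
Proof.
move=> fdf; rewrite (_ : (fun y => _) = \sum_(i <- r | P i) f i); last first.
  by apply/funext => y; rewrite fct_sumE.
by elim/big_ind2: _ => // *; [exact: is_derive_cst | exact: is_deriveD].
Qed.

Lemma is_derive_prod m (f : 'I_m -> V -> R) (df : 'I_m -> R) x v :
  (forall i, is_derive x v (f i) (df i)) ->
  is_derive x v (fun y => \prod_i f i y) (\sum_i df i * \prod_(j | j != i) f j x).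
Proof.
elim: m f df => [|m IH] f df fdf.
  rewrite big_ord0 (_ : (fun y => _) = cst 1); first exact: is_derive_cst.
  by apply/funext => y; rewrite big_ord0.
pose w := widen_ord (leqnSn m).
have w_neq_max i : (w i != ord_max) by rewrite -val_eqE /= neq_ltn ltn_ord.
rewrite (_ : (fun y => _) = (fun y => \prod_i f (w i) y) * f ord_max); last first.
  by apply/funext => y; rewrite big_ord_recr.
apply: (is_derive_eq (is_deriveM (IH _ _ (fun i => fdf (w i))) (fdf ord_max))).
rewrite !scaleE big_ord_recr /= [LHS]addrC; congr (_ + _).
  rewrite mulr_sumr; apply: eq_bigr => i _; rewrite mulrCA; congr (_ * _).
  rewrite [in RHS]big_mkcond big_ord_recr /= eq_sym w_neq_max mulrC; congr (_ * _).
  by rewrite big_mkcond; apply: eq_bigr => j _; rewrite -val_eqE.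
rewrite [in RHS]big_mkcond big_ord_recr /= eqxx mulr1 mulrC.
by congr (_ * _); apply: eq_bigr => i _; rewrite w_neq_max.
Qed.

Definition mx_derivable (F : V -> 'M[R]_n) x v :=
  forall i j, derivable (fun y => F y i j) x v.

Lemma Dm_is_derive (F : V -> 'M[R]_n) (dF : 'M[R]_n) x v :
  (forall i j, is_derive x v (fun y => F y i j) (dF i j)) ->
  mx_derivable F x v /\ Dm F v x = dF.
Proof.
move=> FdF; split=> [i j|]; first exact: (@ex_derive _ _ _ _ _ _ _ (FdF i j)).
by apply/matrixP => i j; rewrite mxE derive_val.
Qed.

Lemma is_derive_Dm (F : V -> 'M[R]_n) x v : mx_derivable F x v ->
  forall i j, is_derive x v (fun y => F y i j) (Dm F v x i j).
Proof. by move=> dF i j; rewrite mxE; apply: derivableP. Qed.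

Section Rules.
Variables (A B : V -> 'M[R]_n) (x v : V).
Hypotheses (dA : mx_derivable A x v) (dB : mx_derivable B x v).

Lemma DmD : mx_derivable (fun y => A y + B y) x v /\
  Dm (fun y => A y + B y) v x = Dm A v x + Dm B v x.
Proof.
apply: Dm_is_derive => i j; rewrite mxE.
rewrite (_ : (fun y => _) = (fun y => A y i j) + (fun y => B y i j)).
  exact: is_deriveD (is_derive_Dm dA i j) (is_derive_Dm dB i j).
by apply/funext => y; rewrite mxE.
Qed.

Lemma DmM : mx_derivable (fun y => A y *m B y) x v /\
  Dm (fun y => A y *m B y) v x = Dm A v x *m B x + A x *m Dm B v x.
Proof.
apply: Dm_is_derive => i j; rewrite (_ : (fun y => _) =
    (fun y => \sum_k (fun z => A z i k) y * (fun z => B z k j) y)); last first.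
  by apply/funext => y; rewrite mxE.
apply: is_derive_eq; first by apply: is_derive_sum_seq => k;
  exact: is_deriveM (is_derive_Dm dA i k) (is_derive_Dm dB k j).
by rewrite !mxE -big_split; apply: eq_bigr => k _; rewrite addrC !mxE mulrC.
Qed.

Lemma Dm_tr : mx_derivable (fun y => (A y)^T) x v /\
  Dm (fun y => (A y)^T) v x = (Dm A v x)^T.
Proof.
apply: Dm_is_derive => i j; rewrite mxE.
rewrite (_ : (fun y => _) = (fun y => A y j i)); first exact: is_derive_Dm.
by apply/funext => y; rewrite mxE.
Qed.

End Rules.

Lemma Dm_cst (C : 'M[R]_n) x v : Dm (fun _ => C) v x = 0.
Proof. by apply/matrixP => i j; rewrite !mxE derive_cst. Qed.

Lemma Dm_near (A B : V -> 'M[R]_n) x v :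
  (\near x, A x = B x) -> Dm A v x = Dm B v x.
Proof.
move=> AB; apply/matrixP => i j; rewrite !mxE; apply: near_eq_derive.
by near=> y; rewrite (near AB y).
Unshelve. all: by end_near.
Qed.

Lemma Dm_linear (F : V -> 'M[R]_n) x :
  (forall i j, differentiable (fun y => F y i j) x) ->
  forall (a : R) u w, Dm F (a *: u + w) x = a *: Dm F u x + Dm F w x.
Proof.
by move=> dF a u w; apply/matrixP => i j; rewrite !mxE !deriveE // linearD linearZ.
Qed.

Lemma bilE (M : 'M[R]_n) (X Y : V) :
  bil M X Y = \sum_i \sum_j X 0 i * M i j * Y 0 j.
Proof.
rewrite /bil mxE exchange_big /=; apply: eq_bigr => j _.
by rewrite !mxE mulr_suml.
Qed.

Lemma is_derive_bil (F : V -> 'M[R]_n) (X Y : V) x v : mx_derivable F x v ->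
  is_derive x v (fun y => bil (F y) X Y) (bil (Dm F v x) X Y).
Proof.
move=> dF; rewrite bilE (_ : (fun y => _) =
   (fun y => \sum_i \sum_j ((X 0 i * Y 0 j) \*: (fun z => F z i j)) y)); last first.
  apply/funext => y; rewrite bilE; apply: eq_bigr => i _; apply: eq_bigr => j _.
  by rewrite mulrAC.
apply: is_derive_eq.
  by do 2![apply: is_derive_sum_seq => ?]; apply: is_deriveZ; exact: is_derive_Dm.
by apply: eq_bigr => i _; apply: eq_bigr => j _; rewrite mulrAC.
Qed.

Lemma is_derive_det (M : V -> 'M[R]_n) x v : mx_derivable M x v ->
  is_derive x v (fun y => \det (M y)) (\tr (Dm M v x *m \adj (M x))).
Proof.
move=> dM; rewrite (_ : (fun y => _) = (fun y => \sum_(s : 'S_n)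
    ((-1) ^+ s \*: (fun z => \prod_i M z i (s i))) y)); last by [].
apply: is_derive_eq.
  apply: is_derive_sum_seq => s; apply: is_deriveZ.
  exact: is_derive_prod (fun i => is_derive_Dm dM i (s i)).
rewrite /mxtrace; under eq_bigr do rewrite scaleE mulr_sumr.
rewrite exchange_big /=; apply: eq_bigr => i _.
rewrite mxE (partition_big (fun s : 'S_n => s i) xpredT) //=.
apply: eq_bigr => j _; rewrite !mxE expand_cofactor mulr_sumr.
apply: eq_big => // s /eqP <-.
rewrite mulrCA mxE; congr (_ * (_ * _)).
by apply: eq_bigl => k; rewrite eq_sym.
Qed.

Lemma derive_ln f x v : derivable f x v -> 0 < f x ->
  derive (fun y => ln (f y)) x v = derive f x v / f x.
Proof.
move=> df fx_gt0.
have along g : derive g x v = derive1 (fun h : R => g (h *: v + x)) 0.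
  rewrite derive1E /derive; set g1 := fun h => h^-1 *: _; set g2 := fun h => h^-1 *: _.
  suff -> : g1 = g2 by [].
  by apply/funext => h; rewrite /g1 /g2 /= scale0r add0r addr0 [_%:A]mulr1.
have f0 : (fun h : R => f (h *: v + x)) 0 = f x by rewrite /= scale0r add0r.
have dln : derivable (@ln R) ((fun h : R => f (h *: v + x)) 0) 1.
  by rewrite f0; exact: (@ex_derive _ _ _ _ _ _ _ (is_derive1_ln fx_gt0)).
rewrite !along -[X in X^`() 0]/(@ln R \o _) (derive1_comp ((derivable1P _ _ _).1 df) dln).
by rewrite f0 derive1E (@derive_val _ _ _ _ _ _ _ (is_derive1_ln fx_gt0)) mulrC.
Qed.

Lemma derive_ln_det (M : V -> 'M[R]_n) x v : mx_derivable M x v -> 0 < \det (M x) ->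
  derive (fun y => ln (\det (M y))) x v = \tr (Dm M v x *m invmx (M x)).
Proof.
move=> dM det_gt0; have dD := is_derive_det dM.
rewrite derive_ln // (@derive_val _ _ _ _ _ _ _ dD).
have Mu : M x \in unitmx by rewrite unitmxE unitfE gt_eqF.
rewrite -[\adj _]mul1mx -(mulVmx Mu) -mulmxA mul_mx_adj mul_mx_scalar -scalemxAr linearZ /=.
by rewrite mulrAC mulfV ?mul1r // gt_eqF.
Qed.

End MatrixFieldCalculus.

Section BilinearForms.
Variables (R : realType) (n : nat).
Local Notation V := 'rV[R]_n.
Implicit Types (M N : 'M[R]_n) (X Y Z : V) (a : R).

Lemma bilDl M X X' Y : bil M (X + X') Y = bil M X Y + bil M X' Y.
Proof. by rewrite /bil !mulmxDl mxE. Qed.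
Lemma bilNl M X Y : bil M (- X) Y = - bil M X Y.
Proof. by rewrite /bil !mulNmx mxE. Qed.
Lemma bilZl M a X Y : bil M (a *: X) Y = a * bil M X Y.
Proof. by rewrite /bil -!scalemxAl mxE. Qed.
Lemma bil0l M Y : bil M 0 Y = 0.
Proof. by rewrite /bil !mul0mx mxE. Qed.
Lemma bilDr M X Y Y' : bil M X (Y + Y') = bil M X Y + bil M X Y'.
Proof. by rewrite /bil linearD /= mulmxDr mxE. Qed.
Lemma bilNr M X Y : bil M X (- Y) = - bil M X Y.
Proof. by rewrite /bil linearN /= mulmxN mxE. Qed.
Lemma bilZr M a X Y : bil M X (a *: Y) = a * bil M X Y.
Proof. by rewrite /bil linearZ /= -scalemxAr mxE. Qed.
Lemma bilDmx M N X Y : bil (M + N) X Y = bil M X Y + bil N X Y.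
Proof. by rewrite /bil mulmxDr mulmxDl mxE. Qed.
Lemma bilNmx M X Y : bil (- M) X Y = - bil M X Y.
Proof. by rewrite /bil mulmxN mulNmx mxE. Qed.
Lemma bilZmx M a X Y : bil (a *: M) X Y = a * bil M X Y.
Proof. by rewrite /bil -scalemxAr -scalemxAl mxE. Qed.
Lemma bil0mx X Y : bil 0 X Y = 0.
Proof. by rewrite /bil mulmx0 mul0mx mxE. Qed.
Lemma bil_mull M N X Y : bil (M *m N) X Y = bil N (X *m M) Y.
Proof. by rewrite /bil !mulmxA. Qed.
Lemma bil_mulr M N X Y : bil (M *m N^T) X Y = bil M X (Y *m N).
Proof. by rewrite /bil trmx_mul !mulmxA. Qed.
Lemma bil_trmx M X Y : bil M^T X Y = bil M Y X.
Proof.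
rewrite /bil; have -> : Y *m M *m X^T = (X *m M^T *m Y^T)^T.
  by rewrite !trmx_mul !trmxK mulmxA.
by rewrite [RHS]mxE.
Qed.

Lemma bil_delta M i j : bil M (evec R i) (evec R j) = M i j.
Proof. by rewrite /bil /evec -rowE trmx_delta -colE !mxE. Qed.

Lemma bil_inj M N : (forall X Y, bil M X Y = bil N X Y) -> M = N.
Proof. by move=> MN; apply/matrixP => i j; rewrite -!bil_delta MN. Qed.

Definition mx_of_bilin (f : V -> V -> R) : 'M[R]_n :=
  \matrix_(i, j) f (evec R i) (evec R j).

Lemma bil_mx_of_bilin (f : V -> V -> R) :
  (forall a X X' Y, f (a *: X + X') Y = a * f X Y + f X' Y) ->
  (forall a X Y Y', f X (a *: Y + Y') = a * f X Y + f X Y') ->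
  forall X Y, f X Y = bil (mx_of_bilin f) X Y.
Proof.
have expand (g : V -> R) : (forall a X X', g (a *: X + X') = a * g X + g X') ->
    forall X, g X = \sum_i X 0 i * g (evec R i).
  move=> g_lin X; have g0 : g 0 = 0.
    have := g_lin 1 0 0; rewrite scale1r !addr0 mul1r => g00.
    by apply: (addrI (g 0)); rewrite addr0 -g00.
  rewrite {1}(row_sum_delta X); elim/big_rec2: _ => [//|i y1 y2 _ <-].
  by rewrite g_lin.
move=> f_linl f_linr X Y; rewrite bilE (expand (f^~ Y)); last by move=> *; apply: f_linl.
apply: eq_bigr => i _; rewrite (expand (f (evec R i))); last by move=> *; apply: f_linr.
by rewrite mulr_sumr; apply: eq_bigr => j _; rewrite mxE mulrA mulrAC.
Qed.

Lemma mxtrace_mul_trmx (A B : 'M[R]_n) :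
  \tr (A *m B^T) = \sum_i \sum_j A i j * B i j.
Proof.
by apply: eq_bigr => i _; rewrite mxE; apply: eq_bigr => j _; rewrite mxE.
Qed.

Lemma ip2_bil (G A B : 'M[R]_n) (a b : ('I_2 -> V) -> R) :
  (forall X Y, a (pair2 X Y) = bil A X Y) -> (forall X Y, b (pair2 X Y) = bil B X Y) ->
  ip2 G a b = 2^-1 * \tr ((invmx G)^T *m A *m invmx G *m B^T).
Proof.
move=> aE bE; rewrite /ip2 mxtrace_mul_trmx; congr (_ * _).
under eq_bigr do under eq_bigr do under eq_bigr do under eq_bigr do
  rewrite aE bE !bil_delta.
under [RHS]eq_bigr do under eq_bigr do rewrite mxE mulr_suml.
under [RHS]eq_bigr do under eq_bigr do under eq_bigr do rewrite mxE !mulr_suml.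
under [LHS]eq_bigr do rewrite exchange_big.
rewrite [LHS]exchange_big.
under [LHS]eq_bigr do rewrite exchange_big.
under [LHS]eq_bigr do under eq_bigr do rewrite exchange_big.
under [LHS]eq_bigr do rewrite exchange_big.
do 4!(apply: eq_bigr => ? _); rewrite !mxE; ring.
Qed.

End BilinearForms.

Section SkewAdjoint.
Variables (R : realType) (n : nat).
Local Notation V := 'rV[R]_n.
Implicit Types (G A B : 'M[R]_n) (X : V).

Definition gskew G A := A *m G = - (G *m A^T).

Lemma gskewD G A B : gskew G A -> gskew G B -> gskew G (A + B).
Proof. by rewrite /gskew linearD /= mulmxDl mulmxDr opprD => -> ->. Qed.

Lemma gskewN G A : gskew G A -> gskew G (- A).
Proof. by rewrite /gskew linearN /= mulNmx mulmxN => ->. Qed.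

Lemma gskewB G A B : gskew G A -> gskew G B -> gskew G (A - B).
Proof. by move=> ? ?; apply/gskewD/gskewN. Qed.

Lemma cplx_gskew G A : A *m A = - 1%:M -> A *m G *m A^T = G -> gskew G A.
Proof. by move=> AA AGA; rewrite /gskew -{1}AGA !mulmxA AA !mulNmx !mul1mx. Qed.

Lemma gskew_trmx_inv G A : G \in unitmx -> gskew G A ->
  A^T *m invmx G = - (invmx G *m A).
Proof.
move=> Gu AG; rewrite -[A^T]mul1mx -(mulVmx Gu) -(mulmxA _ G) -[G *m A^T]opprK -AG.
by rewrite mulmxN mulNmx mulmxA mulmxK.
Qed.

Lemma bil_gskew_diag G A X : G^T = G -> gskew G A -> bil (A *m G) X X = 0.
Proof.
move=> Gsym AG; have : bil (A *m G) X X = - bil (A *m G) X X.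
  by rewrite -{1}bil_trmx trmx_mul Gsym -[G *m A^T]opprK -AG bilNmx.
lra.
Qed.

Lemma unitmx_of_ker0 A : (forall X, X *m A = 0 -> X = 0) -> A \in unitmx.
Proof.
move=> ker0; rewrite -row_free_unit -kermx_eq0; apply/eqP/row_matrixP => i.
by rewrite row0; apply: ker0; rewrite -row_mul mulmx_ker row0.
Qed.

Definition posdef G := forall X, X != 0 -> 0 < bil G X X.

Lemma posdef_isotropic G X : posdef G -> bil G X X = 0 -> X = 0.
Proof. by move=> Gpos GXX; apply/eqP/negP => /negP/Gpos; rewrite GXX ltxx. Qed.

Lemma posdef_unitmx G : posdef G -> G \in unitmx.
Proof.
by move=> Gpos; apply: unitmx_of_ker0 => X XG; apply: (posdef_isotropic Gpos);
  rewrite /bil XG mul0mx mxE.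
Qed.

Lemma gskew_shift_unitmx G A (t : R) : posdef G -> G^T = G -> gskew G A ->
  t != 0 -> A + t%:M \in unitmx.
Proof.
move=> Gpos Gsym AG t0; apply: unitmx_of_ker0 => X.
rewrite mulmxDr mul_mx_scalar => /eqP; rewrite addr_eq0 => /eqP XA.
apply: (posdef_isotropic Gpos); apply/eqP.
have := bil_gskew_diag X Gsym AG; rewrite bil_mull XA bilNl bilZl.
by move/eqP; rewrite oppr_eq0 mulf_eq0 (negbTE t0).
Qed.

Lemma det_gt0_shift (P : 'M[R]_n) :
  (forall t : R, 0 <= t -> \det (P + t%:M) != 0) -> 0 < \det P.
Proof.
move=> Pt; pose q := char_poly (- P).
have qE t : q.[t] = \det (P + t%:M).
  rewrite /q /char_poly -horner_evalE -det_map_mx; congr (\det _).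
  apply/matrixP => i j; rewrite !mxE /= horner_evalE hornerD hornerN hornerC opprK addrC.
  by congr (_ + _); case: (i == j); rewrite /= ?mulr1n ?mulr0n ?hornerX ?horner0.
have q_lc : lead_coef q = 1 by apply/eqP; exact: char_poly_monic.
have [T qT] : exists T, forall t, T <= t -> 1 <= q.[t].
  by rewrite -q_lc; apply: poly_pinfty_gt_lc; rewrite q_lc ltr01.
have T0 : 0 <= Num.max T 0 by rewrite le_max lexx orbT.
rewrite ltNge; apply/negP => det_le0.
have sign_change : q.[0] <= 0 <= q.[Num.max T 0].
  by rewrite qE raddf0 addr0 det_le0 /= (le_trans ler01) // qT // le_max lexx.
have [c /andP [c_ge0 _] /rootP qc0] := poly_ivt T0 sign_change.
by move: (Pt c c_ge0); rewrite -qE qc0 eqxx.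
Qed.

Lemma gskew_det_gt0 G A : posdef G -> G^T = G -> gskew G A -> \det A != 0 ->
  0 < \det A.
Proof.
move=> Gpos Gsym AG detA; apply: det_gt0_shift => t.
rewrite le_eqVlt => /predU1P [<- | t_gt0]; first by rewrite raddf0 addr0.
by rewrite -unitfE -unitmxE (gskew_shift_unitmx Gpos Gsym AG) // gt_eqF.
Qed.

Lemma invmx_cplx A : A *m A = - 1%:M -> invmx A = - A.
Proof.
move=> AA; have AAN : A *m - A = 1%:M by rewrite mulmxN AA opprK.
have [Au _] := mulmx1_unit AAN.
by rewrite -[invmx A]mulmx1 -AAN mulmxA mulVmx // mul1mx.
Qed.

Lemma anticomm_invmx (S D : 'M[R]_n) : S \in unitmx -> D *m S = - (S *m D) ->
  D *m invmx S = - (invmx S *m D).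
Proof.
move=> Su DS; have := congr1 (fun M => invmx S *m M *m invmx S) DS.
rewrite /= mulmxN mulNmx -!mulmxA (mulmxV Su) mulmx1 !mulmxA (mulVmx Su) mul1mx.
by move=> ->; rewrite opprK.
Qed.

Section Traces.
Variables (G S : 'M[R]_n).
Hypotheses (Gu : G \in unitmx) (Su : S \in unitmx) (SG : gskew G S).

Lemma mxtrace_gskew_sym C : \tr ((S *m C + C *m S^T) *m invmx G *m invmx S) = 0.
Proof.
rewrite !mulmxDl linearD /= -!mulmxA mxtrace_mulC -!mulmxA (mulVmx Su) mulmx1.
rewrite (mulmxA S^T) gskew_trmx_inv // mulNmx mulmxN -mulmxA (mulmxV Su) mulmx1.
by rewrite linearN subrr.
Qed.

Lemma mxtrace_gskew_anticomm D H : gskew G D -> D *m S = - (S *m D) ->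
  \tr ((D *m H + H *m D^T) *m invmx G *m invmx S) =
  2 * \tr (H *m invmx G *m invmx S *m D).
Proof.
move=> DG DS; have DSi := anticomm_invmx Su DS.
rewrite !mulmxDl linearD /= -!(mulmxA D) mxtrace_mulC mulr_natl mulr2n; congr (_ + _).
rewrite -(mulmxA H) gskew_trmx_inv // mulmxN !mulNmx -!mulmxA DSi mulmxN.
by rewrite mulmxN opprK.
Qed.

End Traces.

End SkewAdjoint.

Section BismutIdentity.
Variables (R : realType) (n : nat).
Local Notation V := 'rV[R]_n.

Lemma linear_oppE (W : lmodType R) (F : V -> W) :
  (forall (a : R) u w, F (a *: u + w) = a *: F u + F w) -> forall v, F (- v) = - F v.
Proof.
move=> F_lin v; have F0 : F 0 = 0.
  have := F_lin 1 0 0; rewrite scale1r !addr0 scale1r => F00.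
  by apply: (addrI (F 0)); rewrite addr0 -F00.
by have := F_lin (-1) v 0; rewrite addr0 F0 addr0 !scaleN1r.
Qed.

Record metric_jet (G0 : 'M[R]_n) (DG : V -> 'M[R]_n) : Prop := {
  mjet_sym : G0^T = G0;
  mjet_Dsym : forall v, (DG v)^T = DG v;
  mjet_Dlinear : forall (a : R) u w, DG (a *: u + w) = a *: DG u + DG w }.

(* First-order data of (g, I) at a point: [DI v] stands for the derivative of I along v. *)
Record complex_jet (G0 I0 : 'M[R]_n) (DG DI : V -> 'M[R]_n) : Prop := {
  cjet_sqr : I0 *m I0 = - 1%:M;
  cjet_orth : I0 *m G0 *m I0^T = G0;
  cjet_Dlinear : forall (a : R) u w, DI (a *: u + w) = a *: DI u + DI w;
  cjet_Dsqr : forall v, DI v *m I0 + I0 *m DI v = 0;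
  cjet_Dorth : forall v,
    DI v *m G0 *m I0^T + I0 *m DG v *m I0^T + I0 *m G0 *m (DI v)^T = DG v;
  cjet_integrable : forall X Y : V,
    Y *m DI (X *m I0) - X *m DI (Y *m I0) + X *m DI Y *m I0 - Y *m DI X *m I0 = 0 }.

Variables (G0 I0 : 'M[R]_n) (DG DI : V -> 'M[R]_n).
Hypotheses (gJ : metric_jet G0 DG) (iJ : complex_jet G0 I0 DG DI).

(* [dIg v Y Z] is g((D_v I) Y, Z); omega has matrix [I0 *m G0] and [Domega v] is its
   derivative; since I^-1 = -I, [torsion] is d^c_I omega = I^-1 d omega, i.e. H; and
   [christoffel X Y Z] is g(nabla_X Y, Z) for constant vector fields. *)
Definition dIg v Y Z := bil (DI v *m G0) Y Z.
Definition dg v Y Z := bil (DG v) Y Z.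
Definition Domega v := DI v *m G0 + I0 *m DG v.
Definition domega P Q S := bil (Domega P) Q S - bil (Domega Q) P S + bil (Domega S) P Q.
Definition torsion X0 X1 X2 := domega (X0 *m - I0) (X1 *m - I0) (X2 *m - I0).
Definition christoffel X Y Z := 2^-1 * (dg X Y Z + dg Y X Z - dg Z X Y).

Lemma dIgNd v Y Z : dIg (- v) Y Z = - dIg v Y Z.
Proof. by rewrite /dIg (linear_oppE (cjet_Dlinear iJ)) mulNmx bilNmx. Qed.
Lemma dIgNl v Y Z : dIg v (- Y) Z = - dIg v Y Z.
Proof. exact: bilNl. Qed.
Lemma dIgNr v Y Z : dIg v Y (- Z) = - dIg v Y Z.
Proof. exact: bilNr. Qed.
Lemma dgNd v Y Z : dg (- v) Y Z = - dg v Y Z.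
Proof. by rewrite /dg (linear_oppE (mjet_Dlinear gJ)) bilNmx. Qed.
Lemma dgNl v Y Z : dg v (- Y) Z = - dg v Y Z.
Proof. exact: bilNl. Qed.
Lemma dgNr v Y Z : dg v Y (- Z) = - dg v Y Z.
Proof. exact: bilNr. Qed.

Lemma mulmxII (Y : V) : Y *m I0 *m I0 = - Y.
Proof. by rewrite -mulmxA (cjet_sqr iJ) mulmxN mulmx1. Qed.

Local Notation signE := (mulmxN, mulNmx, mulmxII, opprK,
  dIgNd, dIgNl, dIgNr, dgNd, dgNl, dgNr).

Lemma bil_Domega v Y Z : bil (Domega v) Y Z = dIg v Y Z + dg v (Y *m I0) Z.
Proof. by rewrite bilDmx [bil (I0 *m _) _ _]bil_mull. Qed.

Lemma dIg_swapI v Y Z : dIg v (Y *m I0) Z = dIg v Y (Z *m I0).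
Proof.
have IG := cplx_gskew (cjet_sqr iJ) (cjet_orth iJ).
have DIGI : DI v *m G0 *m I0^T = - (DI v *m I0 *m G0).
  by rewrite -mulmxA -[G0 *m I0^T]opprK -IG mulmxN mulmxA.
rewrite /dIg -bil_mull -bil_mulr DIGI bilNmx mulmxA; apply/eqP.
by rewrite -subr_eq0 opprK -bilDmx -mulmxDl addrC (cjet_Dsqr iJ) mul0mx bil0mx.
Qed.

Lemma dIg_Dorth v Y Z :
  dIg v Y (Z *m I0) + dg v (Y *m I0) (Z *m I0) + dIg v Z (Y *m I0) = dg v Y Z.
Proof.
have swap : bil G0 (Y *m I0) (Z *m DI v) = dIg v Z (Y *m I0).
  by rewrite /dIg bil_mull -{1}(mjet_sym gJ) bil_trmx.
rewrite [RHS]/dg -(cjet_Dorth iJ v) !bilDmx !bil_mulr [bil (I0 *m DG v) _ _]bil_mull.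
by rewrite [bil (I0 *m G0) _ _]bil_mull swap.
Qed.

Lemma dIg_integrable X Y Z :
  dIg (X *m I0) Y Z - dIg (Y *m I0) X Z - dIg Y X (Z *m I0) + dIg X Y (Z *m I0) = 0.
Proof.
have IG := cplx_gskew (cjet_sqr iJ) (cjet_orth iJ).
have DIG (v P : V) : bil G0 (P *m DI v) Z = dIg v P Z by rewrite /dIg bil_mull.
have DIIG (v P : V) : bil G0 (P *m DI v *m I0) Z = - dIg v P (Z *m I0).
  by rewrite -mulmxA -bil_mull -mulmxA IG mulmxN bilNmx mulmxA bil_mulr.
have := congr1 (fun M => bil G0 M Z) (cjet_integrable iJ X Y).
rewrite /= !bilDl !bilNl !DIIG !DIG bil0l.
lra.
Qed.

(* nabla^+ I = 0 for the Bismut connection nabla^+ = nabla + g^-1 H / 2; the identity is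
   h1 + (h2 - h3 - h4 - h5 - h6 + h7) / 2. *)
Lemma dIg_bismut X Y Z : dIg X Y Z =
  2^-1 * (torsion X (Y *m I0) Z + torsion X Y (Z *m I0))
  - christoffel X (Y *m I0) Z - christoffel X Y (Z *m I0).
Proof.
have h1 := dIg_swapI X Y (Z *m I0).
have h2 := dIg_integrable X Y (Z *m I0).
have h3 := dIg_Dorth X (Y *m I0) Z.
have h4 := dIg_integrable X (Y *m I0) Z.
have h5 := dIg_Dorth (X *m I0) Y Z.
have h6 := dIg_integrable (X *m I0) Y Z.
have h7 := dIg_integrable (X *m I0) Z Y.
rewrite /torsion /domega /christoffel !bil_Domega !signE in h1 h2 h3 h4 h5 h6 h7 *.
lra.
Qed.

Lemma torsionE X0 X1 X2 : torsion X0 X1 X2 =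
  - (dIg (X0 *m I0) (X1 *m I0) (X2 *m I0) - dg (X0 *m I0) X1 (X2 *m I0)
     - dIg (X1 *m I0) (X0 *m I0) (X2 *m I0) + dg (X1 *m I0) X0 (X2 *m I0)
     + dIg (X2 *m I0) (X0 *m I0) (X1 *m I0) - dg (X2 *m I0) X0 (X1 *m I0)).
Proof. by rewrite /torsion /domega !bil_Domega !signE; lra. Qed.

Lemma torsion_skew X Y Z : torsion X Y Z = - torsion X Z Y.
Proof.
have Domega_skew v P Q : bil (Domega v) P Q = - bil (Domega v) Q P.
  have h1 : dg v P (Q *m I0) = dg v (Q *m I0) P.
    by rewrite /dg -{1}(mjet_Dsym gJ) bil_trmx.
  have h2 := dIg_swapI v P (Q *m I0).
  have h3 := dIg_Dorth v (P *m I0) Q.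
  rewrite !bil_Domega !signE in h2 h3 *; lra.
rewrite /torsion /domega (Domega_skew (X *m - I0)) (Domega_skew (Y *m - I0)).
by rewrite (Domega_skew (Z *m - I0)); lra.
Qed.

Lemma dIg_lind (a : R) u w Y Z : dIg (a *: u + w) Y Z = a * dIg u Y Z + dIg w Y Z.
Proof. by rewrite /dIg (cjet_Dlinear iJ) mulmxDl -scalemxAl bilDmx bilZmx. Qed.
Lemma dIg_linl (a : R) v Y Y' Z : dIg v (a *: Y + Y') Z = a * dIg v Y Z + dIg v Y' Z.
Proof. by rewrite /dIg bilDl bilZl. Qed.
Lemma dIg_linr (a : R) v Y Z Z' : dIg v Y (a *: Z + Z') = a * dIg v Y Z + dIg v Y Z'.
Proof. by rewrite /dIg bilDr bilZr. Qed.
Lemma dg_lind (a : R) u w Y Z : dg (a *: u + w) Y Z = a * dg u Y Z + dg w Y Z.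
Proof. by rewrite /dg (mjet_Dlinear gJ) bilDmx bilZmx. Qed.
Lemma dg_linl (a : R) v Y Y' Z : dg v (a *: Y + Y') Z = a * dg v Y Z + dg v Y' Z.
Proof. by rewrite /dg bilDl bilZl. Qed.
Lemma dg_linr (a : R) v Y Z Z' : dg v Y (a *: Z + Z') = a * dg v Y Z + dg v Y Z'.
Proof. by rewrite /dg bilDr bilZr. Qed.

Local Notation linE := (dIg_lind, dIg_linl, dIg_linr,
  dg_lind, dg_linl, dg_linr).

Lemma torsion_linl X (a : R) Y Y' Z :
  torsion X (a *: Y + Y') Z = a * torsion X Y Z + torsion X Y' Z.
Proof. by rewrite !torsionE !mulmxDl -!scalemxAl !linE; ring. Qed.
Lemma torsion_linr X (a : R) Y Z Z' :
  torsion X Y (a *: Z + Z') = a * torsion X Y Z + torsion X Y Z'.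
Proof. by rewrite !torsionE !mulmxDl -!scalemxAl !linE; ring. Qed.
Lemma christoffel_linl X (a : R) Y Y' Z :
  christoffel X (a *: Y + Y') Z = a * christoffel X Y Z + christoffel X Y' Z.
Proof. by rewrite /christoffel !linE; ring. Qed.
Lemma christoffel_linr X (a : R) Y Z Z' :
  christoffel X Y (a *: Z + Z') = a * christoffel X Y Z + christoffel X Y Z'.
Proof. by rewrite /christoffel !linE; ring. Qed.

Definition torsion_mx X := mx_of_bilin (torsion X).
Definition christoffel_mx X := mx_of_bilin (christoffel X).

Lemma torsion_mxE X Y Z : torsion X Y Z = bil (torsion_mx X) Y Z.
Proof. exact: bil_mx_of_bilin (torsion_linl X) (torsion_linr X) Y Z. Qed.
Lemma christoffel_mxE X Y Z : christoffel X Y Z = bil (christoffel_mx X) Y Z.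
Proof. exact: bil_mx_of_bilin (christoffel_linl X) (christoffel_linr X) Y Z. Qed.

Lemma torsion_mx_skew X : (torsion_mx X)^T = - torsion_mx X.
Proof. by apply/matrixP => i j; rewrite !mxE torsion_skew. Qed.

Lemma DI_mulG X : DI X *m G0 =
  2^-1 *: (I0 *m torsion_mx X + torsion_mx X *m I0^T)
  - (I0 *m christoffel_mx X + christoffel_mx X *m I0^T).
Proof.
apply: bil_inj => Y Z; rewrite -/(dIg X Y Z) dIg_bismut !torsion_mxE !christoffel_mxE.
by rewrite bilDmx bilNmx bilZmx !bilDmx !bil_mulr !bil_mull; lra.
Qed.

End BismutIdentity.

Section GeneralizedKahlerJet.
Variables (R : realType) (n : nat).
Local Notation V := 'rV[R]_n.
Variables (G0 I0 J0 : 'M[R]_n) (DG DI DJ : V -> 'M[R]_n).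
Hypotheses (gJ : metric_jet G0 DG) (iJ : complex_jet G0 I0 DG DI)
  (jJ : complex_jet G0 J0 DG DJ).
Hypothesis torsionIJ : forall X0 X1 X2 : V,
  torsion G0 I0 DG DI X0 X1 X2 = - torsion G0 J0 DG DJ X0 X1 X2.
Hypotheses (Gu : G0 \in unitmx) (Su : I0 + J0 \in unitmx).

Local Notation S := (I0 + J0).
Local Notation K := (I0 - J0).
Local Notation H X := (torsion_mx G0 I0 DG DI X).
Local Notation C X := (christoffel_mx DG X).

Lemma DS_mulG X : (DI X + DJ X) *m G0 =
  2^-1 *: (K *m H X + H X *m K^T) - (S *m C X + C X *m S^T).
Proof.
have HJ : torsion_mx G0 J0 DG DJ X = - H X.
  by apply/matrixP => i j; rewrite !mxE torsionIJ opprK.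
rewrite mulmxDl (DI_mulG gJ iJ) (DI_mulG gJ jJ) HJ; apply: bil_inj => Y Z.
rewrite !raddfB !raddfD /= !(mulmxDl, mulmxDr, mulmxN, mulNmx, bilDmx, bilNmx, bilZmx).
by rewrite !bil_mulr !bil_mull; lra.
Qed.

Lemma anticomm_sub_add : K *m S = - (S *m K).
Proof.
apply: bil_inj => Y Z; rewrite mulmxDr mulmxBr !mulmxBl !mulmxDl (cjet_sqr iJ) (cjet_sqr jJ).
rewrite !(bilDmx, bilNmx); lra.
Qed.

Let gskewI := cplx_gskew (cjet_sqr iJ) (cjet_orth iJ).
Let gskewJ := cplx_gskew (cjet_sqr jJ) (cjet_orth jJ).

Lemma mxtrace_DS_invS X :
  \tr ((DI X + DJ X) *m invmx S) = \tr (H X *m invmx G0 *m invmx S *m K).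
Proof.
rewrite -(mulmxK Gu (DI X + DJ X)) DS_mulG [_ *m invmx G0]mulmxBl [_ *m invmx S]mulmxBl.
rewrite linearB /= -!scalemxAl linearZ /=.
have SG : gskew G0 S := gskewD gskewI gskewJ.
rewrite (mxtrace_gskew_sym Gu Su SG) subr0.
rewrite (mxtrace_gskew_anticomm Gu Su _ (gskewB gskewI gskewJ) anticomm_sub_add).
by rewrite mulrA mulVf ?mul1r // pnatr_eq0.
Qed.

Lemma ip2_bform_torsion X (b : ('I_2 -> V) -> R) :
  (forall Y Z, b (pair2 Y Z) = torsion G0 I0 DG DI X Y Z) ->
  - 2 * ip2 G0 (fun Xs => - bil G0 (Xs ord0 *m K *m invmx S) (Xs ord_max)) b =
  \tr (H X *m invmx G0 *m invmx S *m K).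
Proof.
move=> bE; rewrite (@ip2_bil _ _ _ (- (K *m invmx S *m G0)) (H X)); last first.
- by move=> Y Z; rewrite bE torsion_mxE.
- by move=> Y Z; rewrite bilNmx bil_mull !mulmxA.
rewrite trmx_inv (mjet_sym gJ) (torsion_mx_skew gJ iJ) !(mulmxN, mulNmx) opprK.
rewrite !mulmxA -(mulmxA _ G0) (mulmxV Gu) mulmx1 mxtrace_mulC !mulmxA.
rewrite -(mulmxA _ K) (anticomm_invmx Su anticomm_sub_add) mulmxN linearN /= mulmxA; lra.
Qed.

End GeneralizedKahlerJet.

Section JetsAtAPoint.
Variables (R : realType) (n : nat).
Local Notation V := 'rV[R]_n.
Variables (U : set V) (x : V).
Hypotheses (oU : open U) (Ux : U x).

Lemma near_open (P : V -> Prop) : (forall y, U y -> P y) -> \forall y \near x, P y.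
Proof. by move=> UP; apply: filterS UP _; exact: open_nbhs_nbhs. Qed.

Section Smooth.
Variable F : V -> 'M[R]_n.
Hypothesis sF : smooth_mx_on U F.

Let dF i j : differentiable (fun y => F y i j) x := sF i j [::] Ux.

Lemma smooth_mx_derivable v : mx_derivable F x v.
Proof. by move=> i j; apply: diff_derivable. Qed.

Lemma smooth_mx_Dm_linear (a : R) u w : Dm F (a *: u + w) x = a *: Dm F u x + Dm F w x.
Proof. exact: Dm_linear. Qed.

End Smooth.

Variables (G I : V -> 'M[R]_n).
Hypotheses (gG : riemannian_on U G) (hI : hermitian_cx_on U G I).

Lemma metric_jet_at : metric_jet (G x) (Dm G ^~ x).
Proof.
case: gG => sG [Gsym _]; split=> [|v|]; [exact: Gsym | | exact: smooth_mx_Dm_linear].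
rewrite -(Dm_tr (smooth_mx_derivable sG (v := v))).2; apply: Dm_near.
by apply: near_open => y Uy; rewrite Gsym.
Qed.

Lemma hermitian_orth y : U y -> I y *m G y *m (I y)^T = G y.
Proof.
case: hI => _ [_ [_ herm]] Uy; apply: bil_inj => Y Z.
by rewrite bil_mulr bil_mull herm.
Qed.

Lemma complex_jet_at : complex_jet (G x) (I x) (Dm G ^~ x) (Dm I ^~ x).
Proof.
have sG := gG.1; case: hI => sI [I2 [NI _]].
have [dI dG] := (smooth_mx_derivable sI, smooth_mx_derivable sG).
split=> [|||v|v|X Y]; [exact: I2 | exact: hermitian_orth | exact: smooth_mx_Dm_linear | | |].
- rewrite -(DmM (dI v) (dI v)).2 (Dm_near (B := fun _ => - 1%:M)) ?Dm_cst //.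
  by apply: near_open => y Uy; rewrite I2.
- have [dIG DIG] := DmM (dI v) (dG v).
  rewrite -[RHS](Dm_near (A := fun y => I y *m G y *m (I y)^T)); last first.
    by apply: near_open => y Uy; rewrite hermitian_orth.
  by rewrite (DmM dIG (Dm_tr (dI v)).1).2 DIG (Dm_tr (dI v)).2 mulmxDl.
- exact: NI.
Qed.

Lemma omega_derive (Zs : 'I_2 -> V) v :
  derive (fun y => form_act I (omega G I) y Zs) x v =
  bil (Domega (G x) (I x) (Dm G ^~ x) (Dm I ^~ x) v) (Zs ord0) (Zs ord_max).
Proof.
have sG := gG.1; have sI := hI.1.
rewrite (@near_eq_derive _ _ _ _ (fun y => bil (I y *m G y) (Zs ord0) (Zs ord_max))).
  have [dIG DIG] := DmM (smooth_mx_derivable sI (v := v)) (smooth_mx_derivable sG (v := v)).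
  by rewrite (@derive_val _ _ _ _ _ _ _ (is_derive_bil _ _ dIG)) DIG.
apply: near_open => y Uy; rewrite /form_act /omega /app -bil_mulr -!bil_mull.
by rewrite [I y *m (G y *m _)]mulmxA hermitian_orth.
Qed.

Lemma dc_omega_torsion (Xs : 'I_3 -> V) :
  dc I (omega G I) x Xs = torsion (G x) (I x) (Dm G ^~ x) (Dm I ^~ x)
    (Xs ord0) (Xs (lift ord0 ord0)) (Xs (lift ord0 ord_max)).
Proof.
rewrite /dc {1}/form_act /dform; under eq_bigr do rewrite omega_derive.
rewrite !big_ord_recl big_ord0 /= /app (invmx_cplx (hI.2.1 x Ux)).
have l2 : lift ord0 (lift ord0 ord0) = lift ord0 ord_max :> 'I_3 by apply: val_inj.
have l10 : lift (lift ord0 ord0) ord0 = ord0 :> 'I_3 by apply: val_inj.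
have l1m : lift (lift ord0 ord0) ord_max = lift ord0 ord_max :> 'I_3 by apply: val_inj.
have l20 : lift (lift ord0 ord_max) ord0 = ord0 :> 'I_3 by apply: val_inj.
have l2m : lift (lift ord0 ord_max) ord_max = lift ord0 ord0 :> 'I_3 by apply: val_inj.
rewrite l2 l10 l1m l20 l2m -[bump 0 0]/1%N -[bump 0 1]/2%N.
by rewrite expr0 expr1 sqrrN expr1n !mul1r mulN1r addr0 addrA.
Qed.

End JetsAtAPoint.

Theorem lemma2p13 (R : realType) (m : nat) (U : set 'rV[R]_(2 * m))
  (G I J : 'rV[R]_(2 * m) -> 'M[R]_(2 * m)) :
  gen_kahler_on U G I J ->
  (forall x, U x -> \det (I x + J x) != 0) ->
  forall (x X : 'rV[R]_(2 * m)), U x ->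
    derive (fun y => ln (\det (I y + J y))) x X =
    - 2 * ip2 (G x) (bform G I J x) (contr X (dc I (omega G I)) x).
Proof.
move=> [oU [gG [hI [hJ [HIJ _]]]]] detS x X Ux.
have gJ := metric_jet_at oU Ux gG.
have iJ := complex_jet_at oU Ux gG hI.
have jJ := complex_jet_at oU Ux gG hJ.
have torsionIJ X0 X1 X2 : torsion (G x) (I x) (Dm G ^~ x) (Dm I ^~ x) X0 X1 X2 =
    - torsion (G x) (J x) (Dm G ^~ x) (Dm J ^~ x) X0 X1 X2.
  pose Xs k := if unlift ord0 k is Some j then pair2 X1 X2 j else X0.
  have := HIJ x Xs Ux; rewrite (dc_omega_torsion oU Ux gG hI) (dc_omega_torsion oU Ux gG hJ).
  by rewrite /Xs !liftK unlift_none.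
have Gpos : posdef (G x) by move=> Y; exact: gG.2.2 x Y Ux.
have Gu := posdef_unitmx Gpos.
have SG := gskewD (cplx_gskew (cjet_sqr iJ) (cjet_orth iJ))
                  (cplx_gskew (cjet_sqr jJ) (cjet_orth jJ)).
have detS_gt0 := gskew_det_gt0 Gpos (mjet_sym gJ) SG (detS x Ux).
have Su : I x + J x \in unitmx by rewrite unitmxE unitfE detS.
have [dS DS] :=
  DmD (smooth_mx_derivable Ux hI.1 (v := X)) (smooth_mx_derivable Ux hJ.1 (v := X)).
rewrite derive_ln_det // DS (mxtrace_DS_invS gJ iJ jJ torsionIJ Gu Su).
symmetry; apply: (ip2_bform_torsion gJ iJ jJ Gu Su) => Y Z.
by rewrite /contr (dc_omega_torsion oU Ux gG hI) !liftK unlift_none.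
Qed.
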